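(* The divergence problem for random walks with dynamic weights is undecidable: there is no algorithm that, given computable weight functions $W(n,n+1)$, $W(n,n-1)$ (for $n\geq1$) defining a random walk $\mathcal M$ on $\mathbb{N}$, an initial state $s_0\in\mathbb{N}$ and a finite target set $A\subseteq\mathbb{N}$, decides whether $\mathcal M$ is divergent with respect to $s_0$ and $A$.
   Context: A random walk with dynamic weights is given by computable functions $n\mapsto W(n,n+1)\in\mathbb{Q}_{>0}$ and $n\mapsto W(n,n-1)\in\mathbb{Q}_{>0}$ for $n\geq 1$; its Markov chain has state set $\mathbb{N}$, $p(0,1)=1$, and for $n>0$, $p(n,n+1)=\frac{W(n,n+1)}{W(n,n+1)+W(n,n-1)}$ and $p(n,n-1)=\frac{W(n,n-1)}{W(n,n+1)+W(n,n-1)}$. For a Markov chain $\mathcal M=(S,p)$, $Post^*_{\mathcal M}(X)$ is the set of states reachable from $X$ and $\mathbf{Pr}_{\mathcal M,s}(\mathbf{F}X)$ is the probability that the random path from $s$ ever (including time 0) is in $X$. $\mathcal M$ is divergent w.r.t. $s_0$ and $A$ if there exist computable $f_0,f_1:S\to\mathbb{R}_{\geq0}$ with: (a) for all $0<\theta<1$, $\mathbf{Pr}_{\mathcal M,s_0}(\mathbf{F}f_0^{-1}([0,\theta]))\leq\theta$; (b) for all $s$, $\mathbf{Pr}_{\mathcal M,s}(\mathbf{F}A)\leq f_1(s)$; (c) for all $0<\theta<1$, $\{s\mid f_0(s)\geq\theta\wedge f_1(s)\geq\theta\}\cap Post^*_{\mathcal M}(\{s_0\})$ is finite. *)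

From Stdlib Require Import Reals Lra Lia Arith List Relations ClassicalEpsilon.
From Coquelicot Require Import Coquelicot.
Open Scope R_scope.

(* Unary functions on nat; tuples are coded with the Cantor pairing function. *)

Definition pairN (x y : nat) : nat := ((x + y) * (x + y + 1) / 2 + y)%nat.

Inductive prog : Type :=
| PZero : prog
| PSucc : prog
| PId   : prog
| PFst  : prog
| PSnd  : prog
| PComp : prog -> prog -> prog
| PPair : prog -> prog -> prog
| PRec  : prog -> prog -> prog
| PMu   : prog -> prog.

Inductive eval : prog -> nat -> nat -> Prop :=
| ev_zero : forall x, eval PZero x 0
| ev_succ : forall x, eval PSucc x (S x)
| ev_id   : forall x, eval PId x x
| ev_fst  : forall x y, eval PFst (pairN x y) x
| ev_snd  : forall x y, eval PSnd (pairN x y) y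
| ev_comp : forall f g x y z, eval g x y -> eval f y z -> eval (PComp f g) x z
| ev_pair : forall f g x a b, eval f x a -> eval g x b -> eval (PPair f g) x (pairN a b)
| ev_rec0 : forall f g x y, eval f x y -> eval (PRec f g) (pairN x 0) y
| ev_recS : forall f g x n y z,
    eval (PRec f g) (pairN x n) y -> eval g (pairN x (pairN n y)) z ->
    eval (PRec f g) (pairN x (S n)) z
| ev_mu   : forall f x n,
    eval f (pairN x n) 0 ->
    (forall m, (m < n)%nat -> exists k, eval f (pairN x m) (S k)) ->
    eval (PMu f) x n.

Fixpoint code (p : prog) : nat :=
  match p with
  | PZero => pairN 0 0
  | PSucc => pairN 1 0
  | PId => pairN 2 0
  | PFst => pairN 3 0
  | PSnd => pairN 4 0
  | PComp f g => pairN 5 (pairN (code f) (code g))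
  | PPair f g => pairN 6 (pairN (code f) (code g))
  | PRec f g => pairN 7 (pairN (code f) (code g))
  | PMu f => pairN 8 (code f)
  end.

Fixpoint code_list (l : list nat) : nat :=
  match l with
  | nil => 0%nat
  | x :: l => S (pairN x (code_list l))
  end.

(* A nonnegative rational is coded by pairN a b, denoting a / (b+1). *)
Definition rat_of (a b : nat) : R := INR a / INR (S b).

Definition computes_pos_rat (P : prog) (w : nat -> R) : Prop :=
  forall n : nat, (1 <= n)%nat ->
    exists a b : nat, eval P n (pairN a b) /\ (0 < a)%nat /\ w n = rat_of a b.

Definition computable_real_fun (f : nat -> R) : Prop :=
  exists P : prog, forall s k : nat,
    exists a b : nat, eval P (pairN s k) (pairN a b) /\
      Rabs (f s - rat_of a b) <= / INR (S k).

Section Walk.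
Variables (wu wd : nat -> R).  (* wu n = W(n,n+1), wd n = W(n,n-1) *)

Definition p_up (n : nat) : R :=
  match n with O => 1 | S _ => wu n / (wu n + wd n) end.
Definition p_down (n : nat) : R :=
  match n with O => 0 | S _ => wd n / (wu n + wd n) end.

Definition trans (s t : nat) : R :=
  (if Nat.eq_dec t (S s) then p_up s else 0) +
  (match s with O => 0 | S s' => if Nat.eq_dec t s' then p_down s else 0 end).

Definition reachable (s0 : nat) (t : nat) : Prop :=
  clos_refl_trans nat (fun s t => 0 < trans s t) s0 t.

Definition ind (X : nat -> Prop) (s : nat) : bool :=
  if excluded_middle_informative (X s) then true else false.

Fixpoint reach_n (X : nat -> Prop) (n : nat) (s : nat) : R :=
  if ind X s then 1 else
  match n with
  | O => 0
  | S n' => p_up s * reach_n X n' (S s) + p_down s * reach_n X n' (pred s)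
  end.

(* Pr_s(F X) = limit of the (nondecreasing, bounded) bounded-horizon probabilities *)
Definition PrF (s : nat) (X : nat -> Prop) : R :=
  real (Lim_seq (fun n => reach_n X n s)).

Definition divergent (s0 : nat) (A : list nat) : Prop :=
  exists f0 f1 : nat -> R,
    computable_real_fun f0 /\ computable_real_fun f1 /\
    (forall s, 0 <= f0 s /\ 0 <= f1 s) /\
    (forall theta, 0 < theta < 1 ->
       PrF s0 (fun s => f0 s <= theta) <= theta) /\
    (forall s, PrF s (fun t => In t A) <= f1 s) /\
    (forall theta, 0 < theta < 1 ->
       exists N : nat, forall s,
         theta <= f0 s -> theta <= f1 s -> reachable s0 s -> (s < N)%nat).
End Walk.

Definition input_code (Wu Wd : prog) (s0 : nat) (A : list nat) : nat :=
  pairN (code Wu) (pairN (code Wd) (pairN s0 (code_list A))).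

(* A diagonal argument.  Given a program [d] claimed to decide divergence, a quine-style
   construction yields a weight program whose up-weight at [n] runs [d] for [n] steps on the
   input describing this very walk (down-weights 1, [s0 = 0], [A = {0}]): it is [1/(<n,n>+1)]
   once [d] has answered 1, and 2 otherwise.
   If [d] answers 1, the walk is eventually pushed down so hard that from every state it walks
   straight down to 0 with probability at least some [delta > 0].  Then [f1 >= delta]
   everywhere, so condition (c) forces [f0 < delta] on all large states; but the walk reaches
   these almost surely, contradicting (a).  If [d] answers anything else, the walk moves up
   with probability 2/3 and is divergent with [f0 = 1] and [f1 s = 1/(s+1)].
   Running [d] for [n] steps needs a clocked interpreter, itself written as a program. *)

From Pilot Require Import Defs.
From Stdlib Require Import Reals Lra Lia Arith List Relations ClassicalEpsilon.
From Coquelicot Require Import Coquelicot.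

Open Scope nat_scope.

(** * Cantor pairing *)

Lemma pairN_double x y : 2 * pairN x y = (x + y) * (x + y + 1) + 2 * y.
Proof.
  assert (Heven : forall n, exists k, n * (n + 1) = 2 * k).
  { induction n as [|n [k Hk]]; [exists 0 | exists (k + n + 1)]; nia. }
  unfold pairN. destruct (Heven (x + y)) as [k ->].
  rewrite (Nat.mul_comm 2 k), Nat.div_mul by lia. lia.
Qed.

Arguments pairN : simpl never.

Lemma pairN_inj a b c d : pairN a b = pairN c d -> a = c /\ b = d.
Proof.
  intros H.
  assert (E : (a + b) * (a + b + 1) + 2 * b = (c + d) * (c + d + 1) + 2 * d)
    by (rewrite <- !pairN_double, H; reflexivity).
  destruct (lt_eq_lt_dec (a + b) (c + d)) as [[Hlt|Heq]|Hlt].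
  - assert ((a + b + 1) * (a + b + 2) <= (c + d) * (c + d + 1))
      by (apply Nat.mul_le_mono; lia). nia.
  - rewrite Heq in E. lia.
  - assert ((c + d + 1) * (c + d + 2) <= (a + b) * (a + b + 1))
      by (apply Nat.mul_le_mono; lia). nia.
Qed.

Fixpoint unpair (n : nat) : nat * nat :=
  match n with
  | O => (0, 0)
  | S n' => match unpair n' with
            | (O, y) => (S y, 0)
            | (S x, y) => (x, S y)
            end
  end.

Lemma pairN_unpair n : pairN (fst (unpair n)) (snd (unpair n)) = n.
Proof.
  induction n as [|n IH]; [reflexivity|].
  simpl. destruct (unpair n) as [[|x] y]; simpl in IH |- *;
    apply (Nat.mul_cancel_l _ _ 2); try lia.
  - pose proof (pairN_double (S y) 0). pose proof (pairN_double 0 y). nia.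
  - pose proof (pairN_double x (S y)). pose proof (pairN_double (S x) y). nia.
Qed.

Lemma unpair_pairN a b : unpair (pairN a b) = (a, b).
Proof.
  destruct (unpair (pairN a b)) as [x y] eqn:E.
  pose proof (pairN_unpair (pairN a b)) as H. rewrite E in H.
  destruct (pairN_inj _ _ _ _ H); subst; reflexivity.
Qed.

(** * Program combinators *)

Fixpoint PConst (n : nat) : prog :=
  match n with O => PZero | S m => PComp PSucc (PConst m) end.

Lemma eval_PConst n x : eval (PConst n) x n.
Proof. induction n; simpl; econstructor; eauto; constructor. Qed.

Lemma eval_PFst_unpair x : eval PFst x (fst (unpair x)).
Proof. rewrite <- (pairN_unpair x) at 1. apply ev_fst. Qed.

Lemma eval_PSnd_unpair x : eval PSnd x (snd (unpair x)).
Proof. rewrite <- (pairN_unpair x) at 1. apply ev_snd. Qed.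

Ltac eval_combinators :=
  lazymatch goal with
  | |- eval (PComp _ _) _ _ => eapply ev_comp; [eval_combinators | eval_combinators]
  | |- eval (PPair _ _) _ _ => eapply ev_pair; [eval_combinators | eval_combinators]
  | |- eval PFst _ _ => first [apply ev_fst | apply eval_PFst_unpair]
  | |- eval PSnd _ _ => first [apply ev_snd | apply eval_PSnd_unpair]
  | |- eval PId _ _ => apply ev_id
  | |- eval PZero _ _ => apply ev_zero
  | |- eval PSucc _ _ => apply ev_succ
  | |- eval (PConst _) _ _ => apply eval_PConst
  | _ => idtac
  end.

Definition PSgn : prog := PRec PZero (PComp PSucc PZero).
Definition PIsZero : prog := PRec (PComp PSucc PZero) PZero.
Definition PPredSnd : prog := PRec PZero (PComp PFst PSnd).
Definition PGuard (g : prog) : prog := PRec PZero (PComp g PFst).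
Definition PAdd : prog := PRec PId (PComp PSucc (PComp PSnd PSnd)).
Definition PPred : prog := PComp PPredSnd (PPair PZero PId).

Lemma eval_PSgn x n : eval PSgn (pairN x n) (Nat.min 1 n).
Proof.
  induction n; [apply ev_rec0 | eapply ev_recS; [apply IHn|]]; eval_combinators.
Qed.

Lemma eval_PIsZero x n : eval PIsZero (pairN x n) (1 - n).
Proof.
  induction n; [apply ev_rec0 | eapply ev_recS; [apply IHn|]]; eval_combinators.
Qed.

Lemma eval_PPredSnd x n : eval PPredSnd (pairN x n) (pred n).
Proof.
  induction n; [apply ev_rec0 | eapply ev_recS; [apply IHn|]]; eval_combinators.
Qed.

Lemma eval_PPred n : eval PPred n (pred n).
Proof. unfold PPred. eval_combinators. apply eval_PPredSnd. Qed.

Lemma eval_PAdd a b : eval PAdd (pairN a b) (a + b).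
Proof.
  induction b.
  - rewrite Nat.add_0_r. apply ev_rec0. eval_combinators.
  - rewrite Nat.add_succ_r. eapply ev_recS; [apply IHb|]. eval_combinators.
Qed.

Lemma eval_PGuard_0 g x : eval (PGuard g) (pairN x 0) 0.
Proof. apply ev_rec0. eval_combinators. Qed.

Lemma eval_PGuard_1 g x z : eval g x z -> eval (PGuard g) (pairN x 1) z.
Proof. intros Hg. eapply ev_recS; [apply ev_rec0|]; eval_combinators. exact Hg. Qed.

(* A primitive recursion would evaluate the zero branch even at a successor,
   so both branches are guarded by 0/1 flags and their shifted results added. *)
Definition PCase (F G : prog) : prog :=
  PComp PPred (PComp PAdd (PPair
     (PComp (PGuard (PComp PSucc F)) (PPair PFst PIsZero))
     (PComp (PGuard (PComp PSucc G)) (PPair (PPair PFst PPredSnd) PSgn)))).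

Lemma eval_PCase_0 F G x z : eval F x z -> eval (PCase F G) (pairN x 0) z.
Proof.
  intros HF. unfold PCase.
  apply (ev_comp _ _ _ (S z)); [|apply eval_PPred].
  apply (ev_comp _ _ _ (pairN (S z) 0)); [|rewrite <- (Nat.add_0_r (S z)) at 2; apply eval_PAdd].
  apply ev_pair.
  - apply (ev_comp _ _ _ (pairN x 1)).
    + apply ev_pair; [apply ev_fst | apply eval_PIsZero].
    + apply eval_PGuard_1. eval_combinators. exact HF.
  - apply (ev_comp _ _ _ (pairN (pairN x 0) 0)).
    + apply ev_pair; [apply ev_pair; [apply ev_fst | apply eval_PPredSnd] | apply eval_PSgn].
    + apply eval_PGuard_0.
Qed.

Lemma eval_PCase_S F G x m z : eval G (pairN x m) z -> eval (PCase F G) (pairN x (S m)) z.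
Proof.
  intros HG. unfold PCase.
  apply (ev_comp _ _ _ (S z)); [|apply eval_PPred].
  apply (ev_comp _ _ _ (pairN 0 (S z))); [|apply eval_PAdd].
  apply ev_pair.
  - apply (ev_comp _ _ _ (pairN x 0)).
    + apply ev_pair; [apply ev_fst | apply eval_PIsZero].
    + apply eval_PGuard_0.
  - apply (ev_comp _ _ _ (pairN (pairN x m) 1)).
    + apply ev_pair; [apply ev_pair; [apply ev_fst | apply eval_PPredSnd] | apply eval_PSgn].
    + apply eval_PGuard_1. eval_combinators. exact HG.
Qed.

(** * A clocked interpreter *)

Fixpoint rec_iter (F G : nat -> option nat) (x n : nat) : option nat :=
  match n with
  | O => F x
  | S m => match rec_iter F G x m with Some y => G (pairN x (pairN m y)) | None => None end
  end.

(* State of the search for the least zero of [F <x, _>] after examining [0 .. k-1]: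
   [0] = none found yet, [1] = stuck on an undefined value, [S (S n)] = found [n]. *)
Fixpoint mu_search (F : nat -> option nat) (x k : nat) : nat :=
  match k with
  | O => 0
  | S m => match mu_search F x m with
           | O => match F (pairN x m) with
                  | None => 1 | Some O => S (S m) | Some (S _) => 0 end
           | S st => S st
           end
  end.

(* Only unbounded search can diverge, so the clock [t] just bounds every mu-search. *)
Fixpoint eval_clocked (p : prog) (t x : nat) : option nat :=
  match p with
  | PZero => Some 0
  | PSucc => Some (S x)
  | PId => Some x
  | PFst => Some (fst (unpair x))
  | PSnd => Some (snd (unpair x))
  | PComp f g => match eval_clocked g t x with Some y => eval_clocked f t y | None => None end
  | PPair f g => match eval_clocked f t x, eval_clocked g t x with
                 | Some a, Some b => Some (pairN a b)
                 | _, _ => None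
                 end
  | PRec f g => rec_iter (eval_clocked f t) (eval_clocked g t) (fst (unpair x)) (snd (unpair x))
  | PMu f => match mu_search (eval_clocked f t) x t with S (S n) => Some n | _ => None end
  end.

Definition extends (F F' : nat -> option nat) : Prop :=
  forall z v, F z = Some v -> F' z = Some v.

Lemma rec_iter_extends F G F' G' : extends F F' -> extends G G' ->
  forall x n y, rec_iter F G x n = Some y -> rec_iter F' G' x n = Some y.
Proof.
  intros HF HG x n. induction n as [|n IH]; intros y H; simpl in *; [auto|].
  destruct (rec_iter F G x n) as [v|]; [|discriminate].
  rewrite (IH v eq_refl). auto.
Qed.

Lemma mu_search_0 F x k : mu_search F x k = 0 ->
  forall m, m < k -> exists j, F (pairN x m) = Some (S j).
Proof.
  induction k as [|k IH]; intros H m Hm; simpl in *; [lia|].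
  destruct (mu_search F x k); [|discriminate].
  destruct (F (pairN x k)) as [[|j]|] eqn:E; try discriminate.
  destruct (Nat.eq_dec m k); [subst; eauto | apply IH; auto; lia].
Qed.

Lemma mu_search_found F x k n : mu_search F x k = S (S n) ->
  n < k /\ F (pairN x n) = Some 0 /\
  (forall m, m < n -> exists j, F (pairN x m) = Some (S j)).
Proof.
  revert n. induction k as [|k IH]; intros n H; simpl in *; [discriminate|].
  destruct (mu_search F x k) eqn:E.
  - destruct (F (pairN x k)) as [[|j]|] eqn:E2; try discriminate.
    injection H as <-. repeat split; [lia | exact E2 | apply mu_search_0; exact E].
  - destruct (IH n H) as (? & ? & ?). repeat split; [lia | assumption..].
Qed.

Lemma mu_search_positive F x k : (forall m, m < k -> exists j, F (pairN x m) = Some (S j)) ->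
  mu_search F x k = 0.
Proof.
  induction k as [|k IH]; intros H; simpl; [reflexivity|].
  rewrite IH by (intros; apply H; lia).
  destruct (H k ltac:(lia)) as [j ->]. reflexivity.
Qed.

Lemma mu_search_least F x k n : n < k -> F (pairN x n) = Some 0 ->
  (forall m, m < n -> exists j, F (pairN x m) = Some (S j)) ->
  mu_search F x k = S (S n).
Proof.
  induction k as [|k IH]; intros Hn H0 H1; [lia|].
  simpl. destruct (Nat.eq_dec n k).
  - subst. rewrite mu_search_positive, H0 by auto. reflexivity.
  - rewrite IH by (auto; lia). reflexivity.
Qed.

Lemma eval_clocked_mono p t t' : t <= t' -> extends (eval_clocked p t) (eval_clocked p t').
Proof.
  revert t t'. induction p; intros t t' Ht z v H; simpl in *; auto.
  - destruct (eval_clocked p2 t z) as [y|] eqn:E; [|discriminate].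
    rewrite (IHp2 t t' Ht z y E). exact (IHp1 t t' Ht _ _ H).
  - destruct (eval_clocked p1 t z) as [a|] eqn:E1; [|discriminate].
    destruct (eval_clocked p2 t z) as [b|] eqn:E2; [|discriminate].
    rewrite (IHp1 t t' Ht z a E1), (IHp2 t t' Ht z b E2). exact H.
  - exact (rec_iter_extends _ _ _ _ (IHp1 t t' Ht) (IHp2 t t' Ht) _ _ _ H).
  - destruct (mu_search (eval_clocked p t) z t) as [|[|n]] eqn:E; try discriminate.
    injection H as <-. destruct (mu_search_found _ _ _ _ E) as (Hn & H0 & H1).
    rewrite (mu_search_least _ _ t' n); [reflexivity | lia | exact (IHp t t' Ht _ _ H0) |].
    intros m Hm. destruct (H1 m Hm) as [j Hj]. exists j. exact (IHp t t' Ht _ _ Hj).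
Qed.

Lemma exists_common_time (P : nat -> nat -> Prop) n :
  (forall m t t', t <= t' -> P m t -> P m t') ->
  (forall m, m < n -> exists t, P m t) ->
  exists T, forall m, m < n -> P m T.
Proof.
  intros Hmono. induction n as [|n IH]; intros H; [exists 0; intros; lia|].
  destruct IH as [T1 HT1]; [intros; apply H; lia|].
  destruct (H n ltac:(lia)) as [T2 HT2].
  exists (Nat.max T1 T2). intros m Hm. destruct (Nat.eq_dec m n).
  - subst. apply (Hmono _ T2); [lia | exact HT2].
  - apply (Hmono _ T1); [lia | apply HT1; lia].
Qed.

Lemma eval_clocked_complete : forall p x y, eval p x y -> exists T, eval_clocked p T x = Some y.
Proof.
  fix IH 4. intros p x y H.
  destruct H as [| | | | | f g x y z Hg Hf | f g x a b Hf Hg | f g x y Hf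
                | f g x n y z Hr Hg | f x n Hf Hlt].
  1-3: exists 0; reflexivity.
  1-2: exists 0; simpl; rewrite unpair_pairN; reflexivity.
  - destruct (IH _ _ _ Hg) as [T1 H1], (IH _ _ _ Hf) as [T2 H2].
    exists (Nat.max T1 T2). simpl.
    rewrite (eval_clocked_mono g T1 (Nat.max T1 T2) ltac:(lia) x y H1).
    exact (eval_clocked_mono f T2 (Nat.max T1 T2) ltac:(lia) _ _ H2).
  - destruct (IH _ _ _ Hf) as [T1 H1], (IH _ _ _ Hg) as [T2 H2].
    exists (Nat.max T1 T2). simpl.
    rewrite (eval_clocked_mono f T1 (Nat.max T1 T2) ltac:(lia) x a H1).
    rewrite (eval_clocked_mono g T2 (Nat.max T1 T2) ltac:(lia) x b H2). reflexivity.
  - destruct (IH _ _ _ Hf) as [T1 H1]. exists T1. simpl. rewrite unpair_pairN. exact H1.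
  - destruct (IH _ _ _ Hr) as [T1 H1], (IH _ _ _ Hg) as [T2 H2].
    exists (Nat.max T1 T2). simpl in *. rewrite unpair_pairN in *. simpl in *.
    rewrite (rec_iter_extends _ _ _ _ (eval_clocked_mono f T1 (Nat.max T1 T2) ltac:(lia))
               (eval_clocked_mono g T1 (Nat.max T1 T2) ltac:(lia)) x n y H1).
    exact (eval_clocked_mono g T2 (Nat.max T1 T2) ltac:(lia) _ _ H2).
  - destruct (IH _ _ _ Hf) as [T1 H1].
    destruct (exists_common_time (fun m T => exists k, eval_clocked f T (pairN x m) = Some (S k)) n)
      as [T2 H2].
    + intros m t t' Ht [k Hk]. exists k. exact (eval_clocked_mono f t t' Ht _ _ Hk).
    + intros m Hm. destruct (Hlt m Hm) as [k Hk]. destruct (IH _ _ _ Hk) as [T HT]. eauto.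
    + set (T := Nat.max (S n) (Nat.max T1 T2)). exists T. simpl.
      rewrite (mu_search_least _ _ _ n); [reflexivity | lia | |].
      * exact (eval_clocked_mono f T1 T ltac:(lia) _ _ H1).
      * intros m Hm. destruct (H2 m Hm) as [k Hk]. exists k.
        exact (eval_clocked_mono f T2 T ltac:(lia) _ _ Hk).
Qed.

Lemma eval_clocked_eval p x y t y' :
  eval p x y -> eval_clocked p t x = Some y' -> y' = y.
Proof.
  intros He Ht. destruct (eval_clocked_complete p x y He) as [T HT].
  pose proof (eval_clocked_mono p t (Nat.max t T) ltac:(lia) _ _ Ht).
  pose proof (eval_clocked_mono p T (Nat.max t T) ltac:(lia) _ _ HT). congruence.
Qed.

Definition enc_option (o : option nat) : nat := match o with None => 0 | Some y => S y end.

Definition clocks (c p : prog) : Prop :=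
  forall t x, eval c (pairN x t) (enc_option (eval_clocked p t x)).

Definition ClockBase (q : prog) : prog := PComp PSucc (PComp q PFst).

Definition ClockComp (cf cg : prog) : prog :=
  PComp (PCase PZero (PComp cf (PPair PSnd PFst))) (PPair PSnd cg).

Definition ClockPair (cf cg : prog) : prog :=
  PComp (PCase PZero (PComp (PCase PZero PSucc) (PPair PSnd (PComp PSnd PFst))))
        (PPair (PPair PSnd cg) cf).

Definition ClockRecStep (cg : prog) : prog :=
  PComp (PCase PZero (PComp cg (PPair (PPair (PComp PFst (PComp PFst PFst))
                                             (PPair (PComp PFst (PComp PSnd PFst)) PSnd))
                                      (PComp PSnd (PComp PFst PFst)))))
        (PPair PId (PComp PSnd PSnd)).

Definition ClockRec (cf cg : prog) : prog :=
  PComp (PRec cf (ClockRecStep cg))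
        (PPair (PPair (PComp PFst PFst) PSnd) (PComp PSnd PFst)).

Definition ClockMuStep (cf : prog) : prog :=
  PComp (PCase (PComp (PCase (PConst 1) (PCase (PComp PSucc PSucc) PZero))
                      (PPair (PComp PFst PSnd)
                             (PComp cf (PPair (PPair (PComp PFst PFst) (PComp PFst PSnd))
                                              (PComp PSnd PFst)))))
               (PComp PSucc PSnd))
        (PPair PId (PComp PSnd PSnd)).

Definition ClockMuResult : prog :=
  PComp (PCase PZero (PCase PZero (PComp PSucc PSnd))) (PPair PZero PId).

Definition ClockMu (cf : prog) : prog :=
  PComp ClockMuResult (PComp (PRec PZero (ClockMuStep cf)) (PPair PId PSnd)).

Lemma clocks_comp f g cf cg : clocks cf f -> clocks cg g -> clocks (ClockComp cf cg) (PComp f g).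
Proof.
  intros Hf Hg t x. apply (ev_comp _ _ _ (pairN t (enc_option (eval_clocked g t x)))).
  - eval_combinators. apply Hg.
  - simpl. destruct (eval_clocked g t x) as [y|]; simpl.
    + apply eval_PCase_S. eval_combinators. apply Hf.
    + apply eval_PCase_0. eval_combinators.
Qed.

Lemma clocks_pair f g cf cg : clocks cf f -> clocks cg g -> clocks (ClockPair cf cg) (PPair f g).
Proof.
  intros Hf Hg t x.
  apply (ev_comp _ _ _ (pairN (pairN t (enc_option (eval_clocked g t x)))
                              (enc_option (eval_clocked f t x)))).
  - eval_combinators; [apply Hg | apply Hf].
  - simpl. destruct (eval_clocked f t x) as [a|]; simpl.
    + apply eval_PCase_S. apply (ev_comp _ _ _ (pairN a (enc_option (eval_clocked g t x)))).
      * eval_combinators.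
      * destruct (eval_clocked g t x) as [b|]; simpl.
        -- apply eval_PCase_S. eval_combinators.
        -- apply eval_PCase_0. eval_combinators.
    + apply eval_PCase_0. eval_combinators.
Qed.

Lemma clocks_rec f g cf cg : clocks cf f -> clocks cg g -> clocks (ClockRec cf cg) (PRec f g).
Proof.
  intros Hf Hg t x.
  apply (ev_comp _ _ _ (pairN (pairN (fst (unpair x)) t) (snd (unpair x)))); [eval_combinators|].
  simpl. generalize (snd (unpair x)) as n. generalize (fst (unpair x)) as a. intros a n.
  induction n as [|n IHn]; simpl; [apply ev_rec0, Hf|].
  eapply ev_recS; [apply IHn|]. unfold ClockRecStep.
  set (r := rec_iter (eval_clocked f t) (eval_clocked g t) a n).
  apply (ev_comp _ _ _ (pairN (pairN (pairN a t) (pairN n (enc_option r))) (enc_option r)));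
    [eval_combinators|].
  destruct r as [y|]; simpl.
  - apply eval_PCase_S. apply (ev_comp _ _ _ (pairN (pairN a (pairN n y)) t));
      [eval_combinators | apply Hg].
  - apply eval_PCase_0. eval_combinators.
Qed.

Lemma eval_ClockMuStep f cf x t k : clocks cf f ->
  eval (ClockMuStep cf) (pairN (pairN x t) (pairN k (mu_search (eval_clocked f t) x k)))
       (mu_search (eval_clocked f t) x (S k)).
Proof.
  intros Hf. unfold ClockMuStep.
  set (st := mu_search (eval_clocked f t) x k).
  apply (ev_comp _ _ _ (pairN (pairN (pairN x t) (pairN k st)) st)); [eval_combinators|].
  simpl. fold st. destruct st as [|st]; simpl.
  - apply eval_PCase_0.
    apply (ev_comp _ _ _ (pairN k (enc_option (eval_clocked f t (pairN x k))))).
    + eval_combinators. apply Hf.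
    + destruct (eval_clocked f t (pairN x k)) as [[|c]|]; simpl.
      * apply eval_PCase_S, eval_PCase_0. eval_combinators.
      * apply eval_PCase_S, eval_PCase_S. eval_combinators.
      * apply eval_PCase_0. eval_combinators.
  - apply eval_PCase_S. eval_combinators.
Qed.

Lemma clocks_mu f cf : clocks cf f -> clocks (ClockMu cf) (PMu f).
Proof.
  intros Hf t x. apply (ev_comp _ _ _ (mu_search (eval_clocked f t) x t)).
  - apply (ev_comp _ _ _ (pairN (pairN x t) t)); [eval_combinators|].
    generalize t at 2 4 as k. intros k.
    induction k as [|k IHk]; [apply ev_rec0; eval_combinators|].
    eapply ev_recS; [apply IHk | apply eval_ClockMuStep, Hf].
  - unfold ClockMuResult. simpl.
    apply (ev_comp _ _ _ (pairN 0 (mu_search (eval_clocked f t) x t))); [eval_combinators|].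
    destruct (mu_search (eval_clocked f t) x t) as [|[|n]]; simpl.
    + apply eval_PCase_0. eval_combinators.
    + apply eval_PCase_S, eval_PCase_0. eval_combinators.
    + apply eval_PCase_S, eval_PCase_S. eval_combinators.
Qed.

Fixpoint clock (p : prog) : prog :=
  match p with
  | PComp f g => ClockComp (clock f) (clock g)
  | PPair f g => ClockPair (clock f) (clock g)
  | PRec f g => ClockRec (clock f) (clock g)
  | PMu f => ClockMu (clock f)
  | q => ClockBase q
  end.

Lemma clocks_clock p : clocks (clock p) p.
Proof.
  induction p; simpl.
  1-5: intros t x; unfold ClockBase; eval_combinators.
  - apply clocks_comp; assumption.
  - apply clocks_pair; assumption.
  - apply clocks_rec; assumption.
  - apply clocks_mu; assumption.
Qed.

(** * Random walks *)

Open Scope R_scope.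

Lemma ind_true (X : nat -> Prop) s : X s -> Defs.ind X s = true.
Proof. intros. unfold Defs.ind. destruct (excluded_middle_informative (X s)); tauto. Qed.

Lemma ind_false (X : nat -> Prop) s : ~ X s -> Defs.ind X s = false.
Proof. intros. unfold Defs.ind. destruct (excluded_middle_informative (X s)); tauto. Qed.

Section Walk.
Variables wu wd : nat -> R.
Hypothesis weights_pos : forall n, 0 < wu n /\ 0 < wd n.

Lemma p_up_pos s : 0 < p_up wu wd s.
Proof. destruct s; simpl; [lra|]. destruct (weights_pos (S s)). apply Rdiv_lt_0_compat; lra. Qed.

Lemma p_down_nonneg s : 0 <= p_down wu wd s.
Proof.
  destruct s; simpl; [lra|]. destruct (weights_pos (S s)). apply Rlt_le, Rdiv_lt_0_compat; lra.
Qed.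

Lemma p_up_add_down s : p_up wu wd s + p_down wu wd s = 1.
Proof. destruct s; simpl; [lra|]. destruct (weights_pos (S s)). field. lra. Qed.

Lemma p_up_le1 s : p_up wu wd s <= 1.
Proof. pose proof (p_up_add_down s). pose proof (p_down_nonneg s). lra. Qed.

Lemma reach_n_0 X s : reach_n wu wd X 0 s = if Defs.ind X s then 1 else 0.
Proof. reflexivity. Qed.

Lemma reach_n_S X n s : reach_n wu wd X (S n) s =
  if Defs.ind X s then 1
  else p_up wu wd s * reach_n wu wd X n (S s) + p_down wu wd s * reach_n wu wd X n (pred s).
Proof. reflexivity. Qed.

Lemma reach_n_in (X : nat -> Prop) n s : X s -> reach_n wu wd X n s = 1.
Proof. intros. destruct n; [rewrite reach_n_0 | rewrite reach_n_S]; rewrite ind_true; auto. Qed.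

Lemma reach_n_notin (X : nat -> Prop) n s : ~ X s -> reach_n wu wd X (S n) s =
  p_up wu wd s * reach_n wu wd X n (S s) + p_down wu wd s * reach_n wu wd X n (pred s).
Proof. intros. rewrite reach_n_S, ind_false; auto. Qed.

Lemma reach_n_bounds X n s : 0 <= reach_n wu wd X n s <= 1.
Proof.
  revert s. induction n as [|n IH]; intros s.
  - rewrite reach_n_0. destruct (Defs.ind X s); lra.
  - rewrite reach_n_S. destruct (Defs.ind X s); [lra|].
    pose proof (p_up_pos s). pose proof (p_down_nonneg s). pose proof (p_up_add_down s).
    destruct (IH (S s)), (IH (pred s)). split; nra.
Qed.

Lemma reach_n_le_S X n s : reach_n wu wd X n s <= reach_n wu wd X (S n) s.
Proof.
  revert s. induction n as [|n IH]; intros s;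
    rewrite reach_n_S; [rewrite reach_n_0 | rewrite reach_n_S];
    destruct (Defs.ind X s); try lra;
    pose proof (p_up_pos s); pose proof (p_down_nonneg s).
  - destruct (reach_n_bounds X 0 (S s)), (reach_n_bounds X 0 (pred s)). nra.
  - pose proof (IH (S s)). pose proof (IH (pred s)). nra.
Qed.

Lemma reach_n_le X n m s : (n <= m)%nat -> reach_n wu wd X n s <= reach_n wu wd X m s.
Proof. induction 1; [lra | eapply Rle_trans; [eassumption | apply reach_n_le_S]]. Qed.

Lemma PrF_le X s c : (forall n, reach_n wu wd X n s <= c) -> PrF wu wd s X <= c.
Proof.
  intros H. unfold PrF.
  assert (H1 : Rbar_le (Lim_seq (fun n => reach_n wu wd X n s)) (Lim_seq (fun _ => c)))
    by (apply Lim_seq_le_loc; exists 0%nat; auto).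
  assert (H2 : Rbar_le (Lim_seq (fun _ => 0)) (Lim_seq (fun n => reach_n wu wd X n s)))
    by (apply Lim_seq_le_loc; exists 0%nat; intros; apply reach_n_bounds).
  rewrite Lim_seq_const in H1, H2.
  destruct (Lim_seq (fun n => reach_n wu wd X n s)); simpl in *; try contradiction; lra.
Qed.

Lemma PrF_ge X s c K : (forall n, (K <= n)%nat -> c <= reach_n wu wd X n s) -> c <= PrF wu wd s X.
Proof.
  intros H. unfold PrF.
  assert (H1 : Rbar_le (Lim_seq (fun n => reach_n wu wd X n s)) (Lim_seq (fun _ => 1)))
    by (apply Lim_seq_le_loc; exists 0%nat; intros; apply reach_n_bounds).
  assert (H2 : Rbar_le (Lim_seq (fun _ => c)) (Lim_seq (fun n => reach_n wu wd X n s)))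
    by (apply Lim_seq_le_loc; exists K; auto).
  rewrite Lim_seq_const in H1, H2.
  destruct (Lim_seq (fun n => reach_n wu wd X n s)); simpl in *; try contradiction; lra.
Qed.

Lemma PrF_empty (X : nat -> Prop) s : (forall t, ~ X t) -> PrF wu wd s X = 0.
Proof.
  intros HX. apply Rle_antisym.
  - apply PrF_le. intros n. revert s. induction n; intros s.
    + rewrite reach_n_0, ind_false; auto. lra.
    + rewrite reach_n_notin by auto.
      pose proof (p_up_pos s). pose proof (p_down_nonneg s).
      pose proof (IHn (S s)). pose proof (IHn (pred s)). nra.
  - apply (PrF_ge X s 0 0). intros. apply reach_n_bounds.
Qed.

Lemma PrF_le_supermartingale (X : nat -> Prop) (g : nat -> R) s :
  (forall t, 0 <= g t) -> (forall t, X t -> 1 <= g t) ->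
  (forall t, ~ X t -> p_up wu wd t * g (S t) + p_down wu wd t * g (pred t) <= g t) ->
  PrF wu wd s X <= g s.
Proof.
  intros Hg0 HgX Hsuper. apply PrF_le. intros n. revert s.
  induction n as [|n IH]; intros s; destruct (excluded_middle_informative (X s)) as [Hs|Hs];
    try (rewrite reach_n_in; auto; fail).
  - rewrite reach_n_0, ind_false; auto.
  - rewrite reach_n_notin by auto.
    pose proof (p_up_pos s). pose proof (p_down_nonneg s).
    pose proof (IH (S s)). pose proof (IH (pred s)). pose proof (Hsuper s Hs). nra.
Qed.

Fixpoint straight_down (s : nat) : R :=
  match s with O => 1 | S k => p_down wu wd (S k) * straight_down k end.

Lemma straight_down_le_reach_n s n : (s <= n)%nat ->
  straight_down s <= reach_n wu wd (fun t => In t (0%nat :: nil)) n s.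
Proof.
  revert n. induction s as [|s IH]; intros n Hn.
  - rewrite reach_n_in; simpl; auto. lra.
  - destruct n as [|n]; [lia|]. rewrite reach_n_notin by (simpl; intuition discriminate).
    change (straight_down (S s)) with (p_down wu wd (S s) * straight_down s).
    pose proof (p_up_pos (S s)). pose proof (p_down_nonneg (S s)).
    pose proof (IH n ltac:(lia)).
    destruct (reach_n_bounds (fun t => In t (0%nat :: nil)) n (S (S s))). simpl pred. nra.
Qed.

Fixpoint climb (N j s : nat) : R :=
  if (N <=? s)%nat then 1 else match j with O => 0 | S j' => p_up wu wd s * climb N j' (S s) end.

Lemma climb_bounds N j s : 0 <= climb N j s <= 1.
Proof.
  revert s. induction j; intros s; simpl; destruct (N <=? s)%nat; try lra.
  pose proof (p_up_pos s). pose proof (p_up_le1 s). destruct (IHj (S s)). split; nra.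
Qed.

Lemma climb_ge N mu : 0 < mu <= 1 -> (forall k, (k < N)%nat -> mu <= p_up wu wd k) ->
  forall j s, (N <= s + j)%nat -> mu ^ j <= climb N j s.
Proof.
  intros Hmu Hk j. induction j; intros s Hs; simpl.
  - destruct (N <=? s)%nat eqn:E; [lra|]. apply Nat.leb_nle in E. lia.
  - pose proof (pow_le mu j ltac:(lra)). pose proof (pow_incr mu 1 j ltac:(lra)).
    rewrite pow1 in *. destruct (N <=? s)%nat eqn:E; [nra|].
    apply Nat.leb_nle in E. pose proof (Hk s ltac:(lia)). pose proof (IHj (S s) ltac:(lia)). nra.
Qed.

Lemma miss_after_climb (Y : nat -> Prop) N M n :
  (forall s, (N <= s)%nat -> Y s) -> (forall s, 1 - reach_n wu wd Y n s <= M) ->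
  forall j s, 1 - reach_n wu wd Y (j + n) s <= M * (1 - climb N j s).
Proof.
  intros HY HM.
  assert (HM0 : 0 <= M) by (pose proof (HM 0%nat); destruct (reach_n_bounds Y n 0); lra).
  induction j as [|j IH]; intros s; [|change (S j + n)%nat with (S (j + n))];
    simpl climb; destruct (N <=? s)%nat eqn:E.
  1,3: apply Nat.leb_le in E; rewrite reach_n_in by auto; lra.
  - rewrite Rminus_0_r, Rmult_1_r. apply HM.
  - destruct (excluded_middle_informative (Y s)) as [Hy|Hy].
    + rewrite reach_n_in by auto.
      pose proof (climb_bounds N j (S s)). pose proof (p_up_pos s). pose proof (p_up_le1 s).
      assert (0 <= 1 - p_up wu wd s * climb N j (S s)) by nra. nra.
    + rewrite reach_n_notin by auto.
      pose proof (p_up_add_down s). pose proof (p_up_pos s). pose proof (p_down_nonneg s).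
      pose proof (IH (S s)). pose proof (IH (pred s)). destruct (climb_bounds N j (pred s)).
      assert (0 <= M * climb N j (pred s)) by nra. nra.
Qed.

Lemma p_up_lower_bound N : exists mu, 0 < mu <= 1 /\ forall k, (k < N)%nat -> mu <= p_up wu wd k.
Proof.
  induction N as [|N [mu [Hmu Hk]]]; [exists 1; split; [lra | intros; lia]|].
  exists (Rmin mu (p_up wu wd N)). pose proof (p_up_pos N). pose proof (p_up_le1 N). split.
  - unfold Rmin; destruct (Rle_dec mu (p_up wu wd N)); lra.
  - intros k Hk'. destruct (Nat.eq_dec k N); [subst; apply Rmin_r|].
    eapply Rle_trans; [apply Rmin_l | apply Hk; lia].
Qed.

(* From every state the walk climbs straight to [N] within [N] steps with probability at
   least [mu ^ N], so the probability of missing [Y] decays geometrically. *)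
Lemma PrF_upper_set (Y : nat -> Prop) N s theta : theta < 1 ->
  (forall t, (N <= t)%nat -> Y t) -> theta < PrF wu wd s Y.
Proof.
  intros Htheta HY.
  destruct (p_up_lower_bound N) as [mu [Hmu Hk]].
  set (q := 1 - mu ^ N).
  assert (Hq : 0 <= q < 1).
  { pose proof (pow_lt mu N ltac:(lra)). pose proof (pow_incr mu 1 N ltac:(lra)).
    rewrite pow1 in *. unfold q. lra. }
  assert (Hmiss : forall k t, 1 - reach_n wu wd Y (k * N) t <= q ^ k).
  { induction k as [|k IH]; intros t.
    - change (0 * N)%nat with 0%nat. rewrite pow_O. destruct (reach_n_bounds Y 0 t). lra.
    - change (S k * N)%nat with (N + k * N)%nat.
      eapply Rle_trans; [apply (miss_after_climb Y N (q ^ k) (k * N) HY IH N t)|].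
      pose proof (climb_ge N mu Hmu Hk N t ltac:(lia)). pose proof (pow_le q k ltac:(lra)).
      simpl. unfold q in *. nra. }
  destruct (pow_lt_1_zero q ltac:(rewrite Rabs_right; lra) (1 - theta) ltac:(lra)) as [K HK].
  specialize (HK K (le_n K)). rewrite Rabs_right in HK by (apply Rle_ge, pow_le; lra).
  apply Rlt_le_trans with (reach_n wu wd Y (K * N) s).
  - pose proof (Hmiss K s). lra.
  - apply (PrF_ge _ _ _ (K * N)). intros. apply reach_n_le. assumption.
Qed.

Lemma reachable_ge s0 s : (s0 <= s)%nat -> reachable wu wd s0 s.
Proof.
  induction 1 as [|m _ IH]; [apply rt_refl|].
  eapply rt_trans; [apply IH | apply rt_step].
  unfold trans. destruct (Nat.eq_dec (S m) (S m)); [|congruence].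
  destruct m as [|m]; [|destruct (Nat.eq_dec (S (S m)) m); [lia|]];
    rewrite Rplus_0_r; apply p_up_pos.
Qed.

Lemma not_divergent_of_uniform_hit s0 A delta : 0 < delta < 1 ->
  (forall s, delta <= PrF wu wd s (fun t => In t A)) -> ~ divergent wu wd s0 A.
Proof.
  intros Hdelta Hhit (f0 & f1 & _ & _ & _ & Hsmall & Hf1 & Hfinite).
  destruct (Hfinite delta Hdelta) as [N HN].
  assert (Hlarge : forall s, (Nat.max N s0 <= s)%nat -> f0 s <= delta).
  { intros s Hs. destruct (Rle_lt_dec (f0 s) delta) as [|Hgt]; [assumption|].
    exfalso. assert (s < N)%nat; [|lia].
    apply HN; [lra | eapply Rle_trans; [apply Hhit | apply Hf1] | apply reachable_ge; lia]. }
  pose proof (Hsmall delta Hdelta).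
  pose proof (PrF_upper_set _ _ s0 delta ltac:(lra) Hlarge). lra.
Qed.

End Walk.

Lemma rat_of_1 n : rat_of 1 n = / (INR n + 1).
Proof. unfold rat_of. rewrite (S_INR n). apply Rmult_1_l. Qed.

Lemma computable_real_fun_rat (P : prog) (a b : nat -> nat) :
  (forall s k, eval P (pairN s k) (pairN (a s) (b s))) ->
  computable_real_fun (fun s => rat_of (a s) (b s)).
Proof.
  intros HP. exists P. intros s k. exists (a s), (b s). split; [apply HP|].
  rewrite Rminus_diag, Rabs_R0. apply Rlt_le, Rinv_0_lt_compat, lt_0_INR. lia.
Qed.

Lemma half_pow_le_inv_succ s : (1/2) ^ s <= / (INR s + 1).
Proof.
  assert (H2 : INR s + 1 <= 2 ^ s).
  { induction s as [|s IH]; [simpl; lra|]. rewrite S_INR. simpl. pose proof (pos_INR s). lra. }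
  pose proof (pos_INR s). unfold Rdiv. rewrite Rmult_1_l, pow_inv.
  apply Rinv_le_contravar; [lra | exact H2].
Qed.

Lemma inv_succ_lt_eventually theta : 0 < theta ->
  exists N, forall s, (N <= s)%nat -> / (INR s + 1) < theta.
Proof.
  intros Htheta. destruct (INR_unbounded (/ theta)) as [N HN]. exists N. intros s Hs.
  apply le_INR in Hs. pose proof (Rinv_0_lt_compat theta Htheta).
  rewrite <- (Rinv_inv theta). apply Rinv_lt_contravar; [apply Rmult_lt_0_compat |]; lra.
Qed.

(* With up-probability 2/3, [(1/2) ^ s] is harmonic off 0, so it bounds [Pr_s(F {0})]. *)
Lemma divergent_of_drift_up wu wd s0 :
  (forall n, 0 < wd n) -> (forall n, wu n = 2 * wd n) -> divergent wu wd s0 (0%nat :: nil).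
Proof.
  intros Hwd Hwu.
  assert (Hpos : forall n, 0 < wu n /\ 0 < wd n)
    by (intros n; rewrite Hwu; pose proof (Hwd n); lra).
  exists (fun _ => rat_of 1 0), (fun s => rat_of 1 s).
  refine (conj _ (conj _ (conj _ (conj _ (conj _ _))))).
  - apply (computable_real_fun_rat (PConst (pairN 1 0)) (fun _ => 1%nat) (fun _ => 0%nat)).
    intros. apply eval_PConst.
  - apply (computable_real_fun_rat (PPair (PConst 1) PFst) (fun _ => 1%nat) (fun s => s)).
    intros. eval_combinators.
  - intros s. rewrite !rat_of_1. pose proof (pos_INR s).
    split; apply Rlt_le, Rinv_0_lt_compat; simpl; lra.
  - intros theta Htheta. rewrite PrF_empty; [lra | exact Hpos |].
    intros t. rewrite rat_of_1. simpl. rewrite Rplus_0_l, Rinv_1. lra.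
  - intros s. rewrite rat_of_1. eapply Rle_trans; [|apply half_pow_le_inv_succ].
    apply (PrF_le_supermartingale wu wd Hpos _ (fun t => (1/2) ^ t)).
    + intros t. apply pow_le. lra.
    + intros t [<-|[]]. simpl. lra.
    + intros [|k] Hk; [exfalso; apply Hk; left; reflexivity|].
      simpl. rewrite Hwu. pose proof (Hwd (S k)). apply Req_le. field. lra.
  - intros theta [Htheta _]. destruct (inv_succ_lt_eventually theta Htheta) as [N HN].
    exists N. intros s _ Hs _. rewrite rat_of_1 in Hs.
    destruct (lt_dec s N) as [|Hge]; [assumption|].
    pose proof (HN s ltac:(lia)). lra.
Qed.

(* [half_product s] is the telescoping product of [1 - 1 / k ^ 2] over [2 <= k <= s + 1]. *)
Definition half_product (s : nat) : R := (INR s + 2) / (2 * (INR s + 1)).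

Lemma half_product_ge s : 1/2 <= half_product s.
Proof.
  unfold half_product. pose proof (pos_INR s).
  replace ((INR s + 2) / (2 * (INR s + 1))) with (1/2 + / (2 * (INR s + 1))) by (field; lra).
  pose proof (Rinv_0_lt_compat (2 * (INR s + 1)) ltac:(lra)). lra.
Qed.

Lemma half_product_step s w : 0 <= w -> w * ((INR s + 1) * (INR s + 3)) <= 1 ->
  half_product (S s) <= 1 / (w + 1) * half_product s.
Proof.
  intros Hw Hsmall. unfold half_product. rewrite S_INR. pose proof (pos_INR s).
  assert (E : 1 / (w + 1) * ((INR s + 2) / (2 * (INR s + 1)))
              - (INR s + 1 + 2) / (2 * (INR s + 1 + 1))
              = (1 - w * ((INR s + 1) * (INR s + 3))) / (2 * (INR s + 1) * (INR s + 2) * (w + 1)))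
    by (field; repeat split; lra).
  assert (0 <= (1 - w * ((INR s + 1) * (INR s + 3))) / (2 * (INR s + 1) * (INR s + 2) * (w + 1))).
  { apply Rmult_le_pos; [lra|]. apply Rlt_le, Rinv_0_lt_compat.
    assert (0 < 2 * (INR s + 1) * (INR s + 2)) by nra. nra. }
  lra.
Qed.

Lemma half_product_S_le s : half_product (S s) <= half_product s.
Proof.
  pose proof (half_product_step s 0 (Rle_refl 0) ltac:(lra)).
  rewrite Rplus_0_l, Rdiv_1_r, Rmult_1_l in H. exact H.
Qed.

Lemma quadratic_weight_small s : rat_of 1 (pairN (S s) (S s)) * ((INR s + 1) * (INR s + 3)) <= 1.
Proof.
  rewrite rat_of_1.
  assert (Hle : ((s + 1) * (s + 3) <= pairN (S s) (S s) + 1)%nat)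
    by (pose proof (pairN_double (S s) (S s)); nia).
  apply le_INR in Hle. rewrite plus_INR, !mult_INR, !plus_INR in Hle. simpl in Hle.
  pose proof (pos_INR s). pose proof (pos_INR (pairN (S s) (S s))).
  apply (Rmult_le_reg_l (INR (pairN (S s) (S s)) + 1)); [lra|].
  rewrite <- Rmult_assoc, Rinv_r; lra.
Qed.

Lemma straight_down_quadratic wu T : (forall n, 0 < wu n <= 2) ->
  (forall n, (T <= n)%nat -> wu n = rat_of 1 (pairN n n)) ->
  forall s, (1/3) ^ Nat.min s T * half_product s <= straight_down wu (fun _ => 1) s.
Proof.
  intros Hwu Hlate s. induction s as [|s IH]; [unfold half_product; simpl; lra|].
  change (straight_down wu (fun _ => 1) (S s))
    with (1 / (wu (S s) + 1) * straight_down wu (fun _ => 1) s).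
  pose proof (Hwu (S s)). pose proof (half_product_ge s).
  destruct (le_lt_dec (S s) T).
  - rewrite (Nat.min_l (S s) T), (Nat.min_l s T) in * by lia.
    assert (1/3 <= 1 / (wu (S s) + 1)).
    { unfold Rdiv. rewrite !Rmult_1_l. apply Rinv_le_contravar; lra. }
    pose proof (half_product_S_le s). pose proof (pow_le (1/3) s ltac:(lra)).
    set (p := 1 / (wu (S s) + 1)) in *. set (a := (1/3) ^ s) in *. simpl pow. fold a.
    assert (a * half_product (S s) <= a * half_product s) by (apply Rmult_le_compat_l; lra).
    assert (0 <= a * half_product s) by nra.
    assert (1/3 * (a * half_product s) <= p * (a * half_product s))
      by (apply Rmult_le_compat_r; lra).
    assert (p * (a * half_product s) <= p * straight_down wu (fun _ => 1) s)
      by (apply Rmult_le_compat_l; lra).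
    lra.
  - rewrite (Nat.min_r (S s) T), (Nat.min_r s T) in * by lia.
    assert (half_product (S s) <= 1 / (wu (S s) + 1) * half_product s).
    { rewrite Hlate by lia. apply half_product_step; [|apply quadratic_weight_small].
      rewrite rat_of_1. pose proof (pos_INR (pairN (S s) (S s))).
      apply Rlt_le, Rinv_0_lt_compat. lra. }
    assert (0 < 1 / (wu (S s) + 1)) by (apply Rdiv_lt_0_compat; lra).
    pose proof (pow_le (1/3) T ltac:(lra)). nra.
Qed.

Lemma PrF_hit_zero_quadratic wu T : (forall n, 0 < wu n <= 2) ->
  (forall n, (T <= n)%nat -> wu n = rat_of 1 (pairN n n)) ->
  forall s, (1/3) ^ T / 2 <= PrF wu (fun _ => 1) s (fun t => In t (0%nat :: nil)).
Proof.
  intros Hwu Hlate s.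
  assert (Hpos : forall n, 0 < wu n /\ 0 < 1) by (intros n; split; [apply Hwu | lra]).
  apply (PrF_ge _ _ Hpos _ _ _ s). intros n Hn.
  eapply Rle_trans; [|apply straight_down_le_reach_n; assumption].
  eapply Rle_trans; [|apply (straight_down_quadratic wu T Hwu Hlate)].
  assert (Hpow : (1/3) ^ T <= (1/3) ^ Nat.min s T).
  { replace T with (T - Nat.min s T + Nat.min s T)%nat at 1 by lia. rewrite pow_add.
    pose proof (pow_incr (1/3) 1 (T - Nat.min s T) ltac:(lra)). rewrite pow1 in *.
    pose proof (pow_le (1/3) (Nat.min s T) ltac:(lra)).
    pose proof (pow_le (1/3) (T - Nat.min s T) ltac:(lra)). nra. }
  pose proof (half_product_ge s). pose proof (pow_le (1/3) T ltac:(lra)). nra.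
Qed.

(** * The diagonal walk *)

Definition self_apply (q : prog) : prog := PComp q (PPair (PConst (code q)) PId).

Lemma eval_self_apply q n y : eval q (pairN (code q) n) y -> eval (self_apply q) n y.
Proof. intros H. eapply ev_comp; [eval_combinators | exact H]. Qed.

Definition PCodeConst : prog :=
  PComp (PRec PZero (PPair (PConst 5) (PPair (PConst (pairN 1 0)) (PComp PSnd PSnd))))
        (PPair PZero PId).

Lemma eval_PCodeConst x : eval PCodeConst x (code (PConst x)).
Proof.
  apply (ev_comp _ _ _ (pairN 0 x)); [eval_combinators|].
  induction x as [|x IH]; [apply ev_rec0; eval_combinators|].
  eapply ev_recS; [apply IH|].
  change (code (PConst (S x))) with (pairN 5 (pairN (pairN 1 0) (code (PConst x)))).
  eval_combinators.
Qed.

Definition PCodeSelfApply : prog :=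
  PPair (PConst 5) (PPair PId (PPair (PConst 6) (PPair PCodeConst (PConst (pairN 2 0))))).

Lemma eval_PCodeSelfApply q : eval PCodeSelfApply (code q) (code (self_apply q)).
Proof.
  change (code (self_apply q))
    with (pairN 5 (pairN (code q) (pairN 6 (pairN (code (PConst (code q))) (pairN 2 0))))).
  unfold PCodeSelfApply. eval_combinators. apply eval_PCodeConst.
Qed.

Definition PDownWeight : prog := PConst (pairN 1 0).
Definition PTwo : prog := PConst (pairN 2 0).
Definition input_tail : nat := pairN (code PDownWeight) (pairN 0 (code_list (0%nat :: nil))).

(* On [<code q, n>] with [q = diag_core d], run [d] for [n] steps on the input describing the
   walk with up-weights [self_apply q]; the up-weight at [n] is [1/(<n,n>+1)] if [d] has
   answered [1] by then, and [2] otherwise. *)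
Definition diag_core (d : prog) : prog :=
  PComp (PCase PTwo (PCase PTwo (PCase (PPair (PConst 1) (PPair PId PId)) PTwo)))
        (PPair PSnd (PComp (clock d)
                           (PPair (PPair (PComp PCodeSelfApply PFst) (PConst input_tail)) PSnd))).

Definition diag_up (d : prog) : prog := self_apply (diag_core d).

Definition diag_input (d : prog) : nat := pairN (code (diag_up d)) input_tail.

Lemma input_code_diag d : input_code (diag_up d) PDownWeight 0 (0%nat :: nil) = diag_input d.
Proof. unfold input_code, diag_input, input_tail. reflexivity. Qed.

Definition diag_weight (d : prog) (n : nat) : nat * nat :=
  match eval_clocked d n (diag_input d) with
  | Some 1%nat => (1%nat, pairN n n)
  | _ => (2%nat, 0%nat)
  end.

Definition diag_wu (d : prog) (n : nat) : R :=
  rat_of (fst (diag_weight d n)) (snd (diag_weight d n)).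

Lemma eval_diag_up d n : eval (diag_up d) n (pairN (fst (diag_weight d n)) (snd (diag_weight d n))).
Proof.
  unfold diag_up. refine (eval_self_apply (diag_core d) n _ _).
  remember (code (diag_core d)) as c eqn:Hc. unfold diag_core.
  refine (ev_comp _ _ _ (pairN n (enc_option (eval_clocked d n (diag_input d)))) _ _ _).
  - refine (ev_pair _ _ _ _ _ _ _); [apply ev_snd|].
    refine (ev_comp _ _ _ (pairN (diag_input d) n) _ _ _);
      [|exact (clocks_clock d n (diag_input d))].
    unfold diag_input. eval_combinators. subst c. exact (eval_PCodeSelfApply (diag_core d)).
  - unfold diag_weight. destruct (eval_clocked d n (diag_input d)) as [[|[|y]]|]; simpl.
    + apply eval_PCase_S, eval_PCase_0, eval_PConst.
    + apply eval_PCase_S, eval_PCase_S, eval_PCase_0. eval_combinators.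
    + apply eval_PCase_S, eval_PCase_S, eval_PCase_S, eval_PConst.
    + apply eval_PCase_0, eval_PConst.
Qed.

Lemma computes_diag_up d : computes_pos_rat (diag_up d) (diag_wu d).
Proof.
  intros n _. exists (fst (diag_weight d n)), (snd (diag_weight d n)).
  split; [apply eval_diag_up|]. split; [|reflexivity].
  unfold diag_weight. destruct (eval_clocked d n (diag_input d)) as [[|[|]]|]; simpl; lia.
Qed.

Lemma computes_PDownWeight : computes_pos_rat PDownWeight (fun _ => 1).
Proof.
  intros n _. exists 1%nat, 0%nat. split; [apply eval_PConst|].
  split; [lia | unfold rat_of; simpl; field].
Qed.

Lemma rat_of_2_0 : rat_of 2 0 = 2.
Proof. unfold rat_of. simpl. field. Qed.

Lemma diag_wu_bounds d n : 0 < diag_wu d n <= 2.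
Proof.
  unfold diag_wu, diag_weight.
  destruct (eval_clocked d n (diag_input d)) as [[|[|]]|]; simpl; rewrite ?rat_of_2_0; try lra.
  rewrite rat_of_1. pose proof (pos_INR (pairN n n)).
  split; [apply Rinv_0_lt_compat; lra|].
  apply Rle_trans with 1; [|lra]. rewrite <- Rinv_1. apply Rinv_le_contravar; lra.
Qed.

Lemma diag_wu_late d : eval d (diag_input d) 1 ->
  exists T, forall n, (T <= n)%nat -> diag_wu d n = rat_of 1 (pairN n n).
Proof.
  intros He. destruct (eval_clocked_complete _ _ _ He) as [T HT]. exists T. intros n Hn.
  unfold diag_wu, diag_weight. rewrite (eval_clocked_mono d T n Hn _ _ HT). reflexivity.
Qed.

Lemma diag_wu_two d b : eval d (diag_input d) b -> b <> 1%nat -> forall n, diag_wu d n = 2.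
Proof.
  intros He Hb n. unfold diag_wu, diag_weight.
  destruct (eval_clocked d n (diag_input d)) as [[|[|]]|] eqn:E; try apply rat_of_2_0.
  apply (eval_clocked_eval _ _ _ _ _ He) in E. congruence.
Qed.

Lemma diag_not_divergent d : eval d (diag_input d) 1 ->
  ~ divergent (diag_wu d) (fun _ => 1) 0 (0%nat :: nil).
Proof.
  intros He. destruct (diag_wu_late d He) as [T HT].
  pose proof (pow_lt (1/3) T ltac:(lra)). pose proof (pow_incr (1/3) 1 T ltac:(lra)).
  rewrite pow1 in *.
  apply (not_divergent_of_uniform_hit _ _ (fun n => conj (proj1 (diag_wu_bounds d n)) Rlt_0_1)
           _ _ ((1/3) ^ T / 2)); [lra|].
  exact (PrF_hit_zero_quadratic _ T (diag_wu_bounds d) HT).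
Qed.

Lemma diag_divergent d b : eval d (diag_input d) b -> b <> 1%nat ->
  divergent (diag_wu d) (fun _ => 1) 0 (0%nat :: nil).
Proof.
  intros He Hb. apply divergent_of_drift_up; [intros; lra|].
  intros n. rewrite (diag_wu_two d b He Hb n). ring.
Qed.

Theorem theorem1 :
  ~ exists d : prog,
      forall (Wu Wd : prog) (wu wd : nat -> R) (s0 : nat) (A : list nat),
        computes_pos_rat Wu wu -> computes_pos_rat Wd wd ->
        exists b : nat,
          eval d (input_code Wu Wd s0 A) b /\ (b = 1%nat <-> divergent wu wd s0 A).
Proof.
  intros [d Hd].
  destruct (Hd (diag_up d) PDownWeight (diag_wu d) (fun _ => 1) 0%nat (0%nat :: nil)
              (computes_diag_up d) computes_PDownWeight) as [b [Hb Hiff]].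
  rewrite input_code_diag in Hb.
  destruct (Nat.eq_dec b 1) as [-> | Hb1].
  - exact (diag_not_divergent d Hb (proj1 Hiff eq_refl)).
  - exact (Hb1 (proj2 Hiff (diag_divergent d b Hb Hb1))).
Qed.
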